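(* Let $T>0$ and let $\mathcal P: C[0,T]\to C[0,T]$ be an operator such that, for some $M>0$, $$|\mathcal P[q_1](t)-\mathcal P[q_2](t)|\le M\max_{\tau\in[0,t]}|q_1(\tau)-q_2(\tau)|\qquad\forall q_1,q_2\in C[0,T],\ \forall t\in[0,T].$$ Assume moreover that for every constant $c\ge 0$ the operator $I+c\mathcal P$ is a bijection of $C[0,T]$ onto itself whose inverse satisfies $$|(I+c\mathcal P)^{-1}[w_1](t)-(I+c\mathcal P)^{-1}[w_2](t)|\le L\max_{\tau\in[0,t]}|w_1(\tau)-w_2(\tau)|\qquad\forall w_1,w_2\in C[0,T],\ \forall t\in[0,T],$$ with a constant $L>0$ independent of $c$. Let $w,b\in C[0,T]$ with $b(t)\ge 0$ for all $t\in[0,T]$. Then there exists a unique $q\in C[0,T]$ such that $$q(t)+b(t)\,\mathcal P[q](t)=w(t)\qquad\forall t\in[0,T].$$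
   Context: $C[0,T]$ denotes the space of real continuous functions on $[0,T]$ and $I$ the identity operator. *)

From Stdlib Require Import Reals.
Open Scope R_scope.

(* f : R -> R is continuous on [0,T] (relative to [0,T]); its values outside
   [0,T] are irrelevant.  Elements of C[0,T] are such functions, identified
   up to their values on [0,T]. *)
Definition cont_on (T : R) (f : R -> R) : Prop :=
  forall t, 0 <= t <= T -> forall eps, eps > 0 ->
    exists delta, delta > 0 /\
      forall s, 0 <= s <= T -> Rabs (s - t) < delta -> Rabs (f s - f t) < eps.

Definition is_max_on (f : R -> R) (a b m : R) : Prop :=
  (exists x, a <= x <= b /\ f x = m) /\ (forall x, a <= x <= b -> f x <= m).

Definition IcP (P : (R -> R) -> (R -> R)) (c : R) (q : R -> R) : R -> R :=
  fun s => q s + c * P q s.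

From Stdlib Require Import Reals Lra Lia.
Open Scope R_scope.

(* Cut [0,T] into intervals [a_k, a_(k+1)] on which b oscillates by at most
   1/(2LM). On such an interval, with c = b(a_k) and G = (I + cP)^(-1), the
   equation reads q = G[w + (c - b) P q]. For functions that already agree on
   [0,a_k), causality of P and G makes this map a 1/2-contraction for the sup
   norm on [0,a_(k+1)], so Picard iteration converges to the unique solution
   there; induction on k reaches T. *)

(* Extending f by constants outside [0,T] turns cont_on T f into continuity on R. *)
Definition clamp (a b x : R) : R := Rmax a (Rmin b x).

Lemma clamp_in a b x : a <= b -> a <= clamp a b x <= b.
Proof. intros; unfold clamp, Rmax, Rmin; repeat destruct Rle_dec; lra. Qed.

Lemma clamp_id a b x : a <= x <= b -> clamp a b x = x.
Proof. intros; unfold clamp, Rmax, Rmin; repeat destruct Rle_dec; lra. Qed.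

Lemma clamp_lip a b x y : a <= b -> Rabs (clamp a b x - clamp a b y) <= Rabs (x - y).
Proof.
  intros; unfold clamp, Rmax, Rmin; repeat destruct Rle_dec;
  unfold Rabs; repeat destruct Rcase_abs; lra.
Qed.

Lemma continuity_clamp T f : 0 <= T -> cont_on T f -> continuity (fun x => f (clamp 0 T x)).
Proof.
  intros hT hf x eps heps.
  destruct (hf (clamp 0 T x) (clamp_in 0 T x hT) eps heps) as [d [hd H]].
  exists d; split; [exact hd|].
  intros y [_ hy]; simpl in *; unfold Rdist in *.
  apply H; [apply clamp_in; exact hT|].
  eapply Rle_lt_trans; [apply clamp_lip; exact hT | exact hy].
Qed.

Lemma cont_on_of_continuity_clamp T f :
  continuity (fun x => f (clamp 0 T x)) -> cont_on T f.
Proof.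
  intros hf t ht eps heps.
  destruct (hf t eps heps) as [d [hd H]].
  exists d; split; [exact hd|]; intros s hs hst.
  destruct (Req_dec s t) as [->|hne]; [rewrite Rminus_diag, Rabs_R0; lra|].
  specialize (H s); simpl in H; unfold Rdist in H.
  rewrite !clamp_id in H by lra.
  apply H; repeat split; auto.
Qed.

Lemma cont_on_plus T f g : 0 <= T -> cont_on T f -> cont_on T g ->
  cont_on T (fun x => f x + g x).
Proof.
  intros hT hf hg; apply cont_on_of_continuity_clamp.
  exact (continuity_plus _ _ (continuity_clamp T f hT hf) (continuity_clamp T g hT hg)).
Qed.

Lemma cont_on_minus T f g : 0 <= T -> cont_on T f -> cont_on T g ->
  cont_on T (fun x => f x - g x).
Proof.
  intros hT hf hg; apply cont_on_of_continuity_clamp.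
  exact (continuity_minus _ _ (continuity_clamp T f hT hf) (continuity_clamp T g hT hg)).
Qed.

Lemma cont_on_mult T f g : 0 <= T -> cont_on T f -> cont_on T g ->
  cont_on T (fun x => f x * g x).
Proof.
  intros hT hf hg; apply cont_on_of_continuity_clamp.
  exact (continuity_mult _ _ (continuity_clamp T f hT hf) (continuity_clamp T g hT hg)).
Qed.

Lemma cont_on_const T k : cont_on T (fun _ => k).
Proof.
  intros t ht eps heps; exists 1; split; [lra|].
  intros; rewrite Rminus_diag, Rabs_R0; lra.
Qed.

Lemma dist_max_exists T f g t : 0 <= t <= T -> cont_on T f -> cont_on T g ->
  exists m, is_max_on (fun s => Rabs (f s - g s)) 0 t m.
Proof.
  intros ht hf hg.
  assert (C : continuity (fun x => Rabs (f (clamp 0 T x) - g (clamp 0 T x)))).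
  { apply continuity_comp with (f2 := Rabs); [|apply Rcontinuity_abs].
    apply continuity_minus; apply continuity_clamp; auto; lra. }
  destruct (continuity_ab_maj _ 0 t (proj1 ht) (fun x _ => C x)) as [x [Hmax Hx]].
  exists (Rabs (f x - g x)); split; [exists x; split; auto|].
  intros y hy; specialize (Hmax y hy); rewrite !clamp_id in Hmax by lra; exact Hmax.
Qed.

Lemma dist_bounded T f g t : 0 <= t <= T -> cont_on T f -> cont_on T g ->
  exists D, forall s, 0 <= s <= t -> Rabs (f s - g s) <= D.
Proof.
  intros ht hf hg; destruct (dist_max_exists T f g t ht hf hg) as [m [_ H]].
  exists m; exact H.
Qed.

Lemma uniform_grid T f eps : T > 0 -> cont_on T f -> eps > 0 ->
  exists (a : nat -> R) (N : nat), a O = 0 /\ a (S N) = T /\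
    (forall k, 0 <= a k) /\ (forall k, a k <= a (S k)) /\ (forall k, a k <= T) /\
    (forall k s, a k <= s <= a (S k) -> Rabs (f (a k) - f s) <= eps).
Proof.
  intros hT hf he.
  destruct (Heine (fun x => f (clamp 0 T x)) (fun x => 0 <= x <= T) (compact_P3 0 T)
              (fun x _ => continuity_clamp T f ltac:(lra) hf x) (mkposreal _ he))
    as [[d hd] Hd]; simpl in Hd.
  destruct (INR_unbounded (T / (d / 2))) as [N hN].
  assert (hk : forall k, 0 <= INR k) by exact pos_INR.
  set (a := fun k => Rmin (INR k * (d / 2)) T).
  assert (a_ge0 : forall k, 0 <= a k) by (intro k; apply Rmin_glb; [specialize (hk k)|]; nra).
  assert (a_le : forall k, a k <= T) by (intro k; apply Rmin_r).
  assert (a_step : forall k, a k <= a (S k) <= a k + d / 2)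
    by (intro k; unfold a, Rmin; rewrite S_INR; repeat destruct Rle_dec; lra).
  exists a, N; repeat split; auto; try apply a_step.
  - unfold a, Rmin; simpl; destruct Rle_dec; lra.
  - assert (T < INR (S N) * (d / 2)).
    { rewrite S_INR; apply Rmult_gt_compat_r with (r := d / 2) in hN; [|lra].
      replace (T / (d / 2) * (d / 2)) with T in hN by (field; lra); nra. }
    unfold a, Rmin; destruct Rle_dec; lra.
  - intros k s hs; specialize (a_step k); specialize (a_le (S k)); specialize (a_ge0 k).
    rewrite <- (clamp_id 0 T (a k)), <- (clamp_id 0 T s) by lra.
    apply Rlt_le, Hd; try lra.
    rewrite Rabs_left1; lra.
Qed.

Definition causal_lip (T K : R) (Phi : (R -> R) -> (R -> R)) : Prop :=
  forall q1 q2, cont_on T q1 -> cont_on T q2 ->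
    forall t, 0 <= t <= T -> forall m,
      is_max_on (fun s => Rabs (q1 s - q2 s)) 0 t m ->
      Rabs (Phi q1 t - Phi q2 t) <= K * m.

Section CausalLipschitz.
Variables (T K : R) (Phi : (R -> R) -> (R -> R)).
Hypotheses (hPhi : causal_lip T K Phi) (hK : 0 <= K).

Lemma causal_lip_le q1 q2 t B : cont_on T q1 -> cont_on T q2 -> 0 <= t <= T ->
  (forall s, 0 <= s <= t -> Rabs (q1 s - q2 s) <= B) ->
  Rabs (Phi q1 t - Phi q2 t) <= K * B.
Proof.
  intros h1 h2 ht hB.
  destruct (dist_max_exists T q1 q2 t ht h1 h2) as [m hm].
  eapply Rle_trans; [exact (hPhi q1 q2 h1 h2 t ht m hm)|].
  apply Rmult_le_compat_l; [exact hK|].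
  destruct hm as [[x [hx <-]] _]; apply hB, hx.
Qed.

Lemma causal_lip_eq q1 q2 t : cont_on T q1 -> cont_on T q2 -> 0 <= t <= T ->
  (forall s, 0 <= s <= t -> q1 s = q2 s) -> Phi q1 t = Phi q2 t.
Proof.
  intros h1 h2 ht e.
  assert (H : Rabs (Phi q1 t - Phi q2 t) <= K * 0).
  { apply causal_lip_le; auto.
    intros s hs; rewrite e, Rminus_diag, Rabs_R0 by exact hs; lra. }
  rewrite Rmult_0_r in H; revert H; unfold Rabs; destruct Rcase_abs; lra.
Qed.

End CausalLipschitz.

Lemma geom_lt K eps : 0 <= K -> eps > 0 -> exists n, K * (/2) ^ n < eps.
Proof.
  intros hK he.
  destruct (pow_lt_1_zero (/2)) with (y := eps / (K + 1)) as [N hN].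
  { rewrite Rabs_right; lra. }
  { apply Rdiv_lt_0_compat; lra. }
  exists N; specialize (hN N (le_n N)).
  assert (hp : 0 <= (/2) ^ N) by (apply pow_le; lra).
  rewrite Rabs_right in hN by lra.
  apply Rle_lt_trans with ((K + 1) * (/2) ^ N); [nra|].
  apply Rmult_lt_reg_r with (/ (K + 1)); [apply Rinv_0_lt_compat; lra|].
  replace ((K + 1) * (/2) ^ N * / (K + 1)) with ((/2) ^ N) by (field; lra).
  exact hN.
Qed.

Lemma eq0_of_le_geom x K : (forall n, Rabs x <= K * (/2) ^ n) -> x = 0.
Proof.
  intros H; destruct (Req_dec x 0) as [|hx]; [assumption|exfalso].
  destruct (geom_lt (Rabs K) (Rabs x) (Rabs_pos K) (Rabs_pos_lt x hx)) as [n hn].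
  assert (K * (/2) ^ n <= Rabs K * (/2) ^ n).
  { apply Rmult_le_compat_r; [apply pow_le; lra | apply Rle_abs]. }
  specialize (H n); lra.
Qed.

Lemma geom_tail (u : nat -> R) D :
  (forall n, Rabs (u (S n) - u n) <= D * (/2) ^ n) ->
  forall n m, (n <= m)%nat -> Rabs (u m - u n) <= 2 * D * (/2) ^ n.
Proof.
  intros H n m hnm.
  assert (hD : 0 <= D) by (specialize (H O); simpl in H; generalize (Rabs_pos (u 1%nat - u O)); lra).
  assert (Hk : forall k, Rabs (u (n + k)%nat - u n) <= 2 * D * (/2) ^ n - 2 * D * (/2) ^ (n + k)).
  { induction k as [|k IH].
    - rewrite Nat.add_0_r, Rminus_diag, Rabs_R0; lra.
    - rewrite Nat.add_succ_r.
      replace (u (S (n + k)) - u n) with ((u (S (n + k)) - u (n + k)%nat) + (u (n + k)%nat - u n)) by ring.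
      eapply Rle_trans; [apply Rabs_triang|].
      specialize (H (n + k)%nat); simpl pow; lra. }
  replace m with (n + (m - n))%nat by lia.
  specialize (Hk (m - n)%nat).
  assert (0 <= (/2) ^ (n + (m - n))) by (apply pow_le; lra).
  nra.
Qed.

Lemma Un_cv_dist_le u l y n K : Un_cv u l ->
  (forall m, (n <= m)%nat -> Rabs (u m - y) <= K) -> Rabs (y - l) <= K.
Proof.
  intros hu hb; destruct (Rle_lt_dec (Rabs (y - l)) K) as [|hlt]; [assumption|exfalso].
  destruct (hu (Rabs (y - l) - K) ltac:(lra)) as [N hN].
  specialize (hN (Nat.max n N) ltac:(lia)); specialize (hb (Nat.max n N) ltac:(lia)).
  unfold Rdist in hN.
  assert (Rabs (y - l) <= Rabs (u (Nat.max n N) - y) + Rabs (u (Nat.max n N) - l)).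
  { replace (y - l) with (- (u (Nat.max n N) - y) + (u (Nat.max n N) - l)) by ring.
    rewrite <- (Rabs_Ropp (u _ - y)); apply Rabs_triang. }
  lra.
Qed.
Lemma half_pow_le n m : (n <= m)%nat -> (/2) ^ m <= (/2) ^ n.
Proof.
  intros h; replace m with (n + (m - n))%nat by lia; rewrite pow_add.
  assert (0 <= (/2) ^ n) by (apply pow_le; lra).
  assert ((/2) ^ (m - n) <= 1) by (rewrite <- (pow1 (m - n)); apply pow_incr; lra).
  nra.
Qed.

Lemma cont_on_geom_limit T be C (u : nat -> R -> R) : 0 <= be <= T ->
  (forall n, cont_on T (u n)) ->
  (forall n m s, (n <= m)%nat -> 0 <= s <= be -> Rabs (u m s - u n s) <= C * (/2) ^ n) ->
  exists q, cont_on T q /\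
    forall n s, 0 <= s <= be -> Rabs (u n s - q s) <= C * (/2) ^ n.
Proof.
  intros hbe hu hC.
  assert (hC0 : 0 <= C).
  { specialize (hC O O 0 (le_n O) ltac:(lra)); simpl in hC.
    rewrite Rminus_diag, Rabs_R0 in hC; lra. }
  assert (hcl : forall t, 0 <= clamp 0 be t <= be) by (intro t; apply clamp_in; lra).
  assert (cau : forall t, Cauchy_crit (fun n => u n (clamp 0 be t))).
  { intros t eps heps.
    destruct (geom_lt C eps hC0 heps) as [N hN].
    exists N; intros n m hn hm; unfold Rdist.
    assert (mono : forall k, (N <= k)%nat -> C * (/2) ^ k <= C * (/2) ^ N).
    { intros k hk; apply Rmult_le_compat_l; [exact hC0|].
      apply half_pow_le, hk. }
    destruct (Nat.le_ge_cases n m) as [h|h].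
    - rewrite Rabs_minus_sym; specialize (mono n hn).
      specialize (hC n m _ h (hcl t)); lra.
    - specialize (mono m hm); specialize (hC m n _ h (hcl t)); lra. }
  set (q := fun t => proj1_sig (R_complete _ (cau t))).
  assert (Hq : forall n t, Rabs (u n (clamp 0 be t) - q t) <= C * (/2) ^ n).
  { intros n t; apply (Un_cv_dist_le _ _ _ n _ (proj2_sig (R_complete _ (cau t)))).
    intros m hm; apply hC; auto. }
  exists q; split.
  - intros t ht eps heps.
    destruct (geom_lt C (eps / 3) hC0 ltac:(lra)) as [n hn].
    destruct (hu n (clamp 0 be t) ltac:(specialize (hcl t); lra) (eps / 3) ltac:(lra))
      as [d [hd Hd]].
    exists d; split; [exact hd|]; intros s hs hst.
    assert (X := Hd (clamp 0 be s) ltac:(specialize (hcl s); lra)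
                   (Rle_lt_trans _ _ _ (clamp_lip 0 be s t ltac:(lra)) hst)).
    assert (Y1 := Hq n s); assert (Y2 := Hq n t).
    replace (q s - q t) with (- (u n (clamp 0 be s) - q s)
      + (u n (clamp 0 be s) - u n (clamp 0 be t)) + (u n (clamp 0 be t) - q t)) by ring.
    eapply Rle_lt_trans; [apply Rabs_triang|].
    eapply Rle_lt_trans; [apply Rplus_le_compat_r, Rabs_triang|].
    rewrite Rabs_Ropp; lra.
  - intros n s hs; specialize (Hq n s); rewrite clamp_id in Hq by exact hs; exact Hq.
Qed.
Definition resolvent (T L : R) (P : (R -> R) -> (R -> R)) (c : R)
    (G : (R -> R) -> (R -> R)) : Prop :=
  (forall w, cont_on T w -> cont_on T (G w)) /\
  (forall w, cont_on T w -> forall t, 0 <= t <= T -> IcP P c (G w) t = w t) /\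
  (forall q, cont_on T q -> forall t, 0 <= t <= T -> G (IcP P c q) t = q t) /\
  causal_lip T L G.

Section Step.
Context {T M L c a be : R} {P G : (R -> R) -> (R -> R)} {b w : R -> R}.
Hypotheses (hM : M > 0) (hL : L > 0) (hPC : forall q, cont_on T q -> cont_on T (P q))
  (hP : causal_lip T M P) (hG : resolvent T L P c G)
  (hb : cont_on T b) (hw : cont_on T w) (ha : 0 <= a) (hab : a <= be) (hbe : be <= T)
  (hosc : forall s, a <= s <= be -> Rabs (c - b s) <= / (2 * L * M)).

Definition step_rhs (q : R -> R) : R -> R := fun s => w s + (c - b s) * P q s.

Lemma cont_on_step_rhs q : cont_on T q -> cont_on T (step_rhs q).
Proof.
  intros hq; assert (hT : 0 <= T) by lra.
  apply cont_on_plus, cont_on_mult, hPC, hq; auto.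
  apply cont_on_minus; auto using cont_on_const.
Qed.

Lemma cont_on_IcP q : cont_on T q -> cont_on T (IcP P c q).
Proof.
  intros hq; assert (hT : 0 <= T) by lra.
  apply cont_on_plus, cont_on_mult, hPC, hq; auto using cont_on_const.
Qed.

Lemma step_rhs_causal q1 q2 t : cont_on T q1 -> cont_on T q2 -> 0 <= t <= T ->
  (forall s, 0 <= s <= t -> q1 s = q2 s) -> G (step_rhs q1) t = G (step_rhs q2) t.
Proof.
  intros h1 h2 ht e; destruct hG as (_ & _ & _ & hGlip).
  apply (causal_lip_eq T L G hGlip); auto using cont_on_step_rhs; try lra.
  intros s hs; unfold step_rhs.
  rewrite (causal_lip_eq T M P hP ltac:(lra) q1 q2 s); auto; try lra.
  intros r hr; apply e; lra.
Qed.

Lemma solution_fixed q t : cont_on T q -> 0 <= t <= T ->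
  (forall s, 0 <= s <= t -> q s + b s * P q s = w s) -> G (step_rhs q) t = q t.
Proof.
  intros hq ht e; destruct hG as (_ & _ & hGl & hGlip).
  rewrite <- (hGl q hq t ht).
  apply (causal_lip_eq T L G hGlip); auto using cont_on_step_rhs, cont_on_IcP; try lra.
  intros s hs; unfold step_rhs, IcP; rewrite <- (e s hs); ring.
Qed.

Lemma fixed_point_solves q : cont_on T q ->
  (forall t, 0 <= t <= be -> G (step_rhs q) t = q t) ->
  forall t, 0 <= t <= be -> q t + b t * P q t = w t.
Proof.
  intros hq hfix t ht; destruct hG as (hGC & hGr & _ & _).
  assert (hrhs := cont_on_step_rhs q hq).
  assert (E := hGr _ hrhs t ltac:(lra)); unfold IcP in E.
  rewrite (causal_lip_eq T M P hP ltac:(lra) _ q t (hGC _ hrhs) hq ltac:(lra)) in E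
    by (intros s hs; apply hfix; lra).
  rewrite hfix in E by exact ht; unfold step_rhs in E; lra.
Qed.

(* On [0,a) the two right-hand sides coincide by causality; on [a,be] the factor
   c - b is at most 1/(2LM), and G, P contribute the factors L and M. *)
Lemma step_contraction q1 q2 B : cont_on T q1 -> cont_on T q2 ->
  (forall s, 0 <= s < a -> q1 s = q2 s) ->
  (forall s, 0 <= s <= be -> Rabs (q1 s - q2 s) <= B) ->
  forall t, 0 <= t <= be -> Rabs (G (step_rhs q1) t - G (step_rhs q2) t) <= B / 2.
Proof.
  intros h1 h2 agree hB t ht; destruct hG as (_ & _ & _ & hGlip).
  assert (hB0 : 0 <= B) by (specialize (hB 0 ltac:(lra)); generalize (Rabs_pos (q1 0 - q2 0)); lra).
  assert (he : 0 < / (2 * L * M)) by (apply Rinv_0_lt_compat; nra).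
  replace (B / 2) with (L * (/ (2 * L * M) * (M * B))) by (field; lra).
  apply (causal_lip_le T L G hGlip); auto using cont_on_step_rhs; try lra.
  intros s hs; unfold step_rhs.
  replace (w s + (c - b s) * P q1 s - (w s + (c - b s) * P q2 s))
    with ((c - b s) * (P q1 s - P q2 s)) by ring.
  rewrite Rabs_mult.
  destruct (Rlt_le_dec s a) as [hsa|hsa].
  - rewrite (causal_lip_eq T M P hP ltac:(lra) q1 q2 s h1 h2 ltac:(lra))
      by (intros r hr; apply agree; lra).
    rewrite Rminus_diag, Rabs_R0, Rmult_0_r; apply Rmult_le_pos; nra.
  - apply Rmult_le_compat; try apply Rabs_pos; [apply hosc; lra|].
    apply (causal_lip_le T M P hP); auto; try lra.
    intros r hr; apply hB; lra.
Qed.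

Lemma unique_step q1 q2 : cont_on T q1 -> cont_on T q2 ->
  (forall t, 0 <= t <= be -> q1 t + b t * P q1 t = w t) ->
  (forall t, 0 <= t <= be -> q2 t + b t * P q2 t = w t) ->
  (forall s, 0 <= s < a -> q1 s = q2 s) ->
  forall t, 0 <= t <= be -> q1 t = q2 t.
Proof.
  intros h1 h2 e1 e2 agree.
  assert (fix1 : forall t, 0 <= t <= be -> G (step_rhs q1) t = q1 t)
    by (intros t ht; apply solution_fixed; auto; try lra; intros s hs; apply e1; lra).
  assert (fix2 : forall t, 0 <= t <= be -> G (step_rhs q2) t = q2 t)
    by (intros t ht; apply solution_fixed; auto; try lra; intros s hs; apply e2; lra).
  destruct (dist_bounded T q1 q2 be ltac:(lra) h1 h2) as [D hD].
  assert (H : forall n s, 0 <= s <= be -> Rabs (q1 s - q2 s) <= D * (/2) ^ n).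
  { induction n as [|n IH]; intros s hs; [simpl; rewrite Rmult_1_r; auto|].
    rewrite <- fix1, <- fix2 by exact hs.
    replace (D * (/2) ^ S n) with (D * (/2) ^ n / 2) by (simpl; field).
    apply step_contraction; auto. }
  intros t ht.
  assert (q1 t - q2 t = 0) by (apply (eq0_of_le_geom _ D); intro n; apply H, ht).
  lra.
Qed.

Section Picard.
Variable q0 : R -> R.
Hypotheses (hq0 : cont_on T q0) (e0 : forall t, 0 <= t < a -> q0 t + b t * P q0 t = w t).

Definition picard (n : nat) : R -> R := Nat.iter n (fun q => G (step_rhs q)) q0.

Lemma cont_on_picard n : cont_on T (picard n).
Proof.
  induction n as [|n IH]; [exact hq0|].
  destruct hG as (hGC & _); apply hGC, cont_on_step_rhs, IH.
Qed.

Lemma picard_agree n t : 0 <= t < a -> picard n t = q0 t.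
Proof.
  revert t; induction n as [|n IH]; intros t ht; [reflexivity|].
  change (G (step_rhs (picard n)) t = q0 t).
  rewrite (step_rhs_causal _ q0 t (cont_on_picard n) hq0 ltac:(lra))
    by (intros s hs; apply IH; lra).
  apply solution_fixed; auto; try lra.
  intros s hs; apply e0; lra.
Qed.

Lemma picard_fixed_point : exists q, cont_on T q /\
  forall t, 0 <= t <= be -> G (step_rhs q) t = q t.
Proof.
  destruct (dist_bounded T (picard 1) (picard 0) be ltac:(lra)
              (cont_on_picard 1) (cont_on_picard 0)) as [D hD].
  assert (Hstep : forall n s, 0 <= s <= be ->
            Rabs (picard (S n) s - picard n s) <= D * (/2) ^ n).
  { induction n as [|n IH]; intros s hs; [simpl pow; rewrite Rmult_1_r; auto|].
    replace (D * (/2) ^ S n) with (D * (/2) ^ n / 2) by (simpl; field).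
    change (Rabs (G (step_rhs (picard (S n))) s - G (step_rhs (picard n)) s) <= D * (/2) ^ n / 2).
    apply step_contraction; auto using cont_on_picard.
    intros r hr; rewrite !picard_agree; auto. }
  destruct (cont_on_geom_limit T be (2 * D) picard ltac:(lra) cont_on_picard)
    as [q [hq Hq]].
  { intros n m s hnm hs; apply (geom_tail (fun k => picard k s)); auto. }
  assert (agree : forall s, 0 <= s < a -> q s = q0 s).
  { intros s hs; assert (q0 s - q s = 0); [|lra].
    apply (eq0_of_le_geom _ (2 * D)); intro n.
    specialize (Hq n s ltac:(lra)); rewrite picard_agree in Hq; auto. }
  exists q; split; [exact hq|]; intros t ht.
  assert (G (step_rhs q) t - q t = 0); [|lra].
  apply (eq0_of_le_geom _ (2 * D)); intro n.
  assert (Z1 : Rabs (G (step_rhs q) t - picard (S n) t) <= 2 * D * (/2) ^ n / 2).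
  { apply step_contraction; auto using cont_on_picard.
    - intros r hr; rewrite agree, picard_agree; auto.
    - intros r hr; rewrite Rabs_minus_sym; apply Hq, hr. }
  assert (Z2 := Hq (S n) t ht).
  replace (2 * D * (/2) ^ S n) with (2 * D * (/2) ^ n / 2) in Z2 by (simpl; field).
  replace (G (step_rhs q) t - q t)
    with ((G (step_rhs q) t - picard (S n) t) + (picard (S n) t - q t)) by ring.
  eapply Rle_trans; [apply Rabs_triang | lra].
Qed.

End Picard.

Lemma exists_step q0 : cont_on T q0 ->
  (forall t, 0 <= t < a -> q0 t + b t * P q0 t = w t) ->
  exists q, cont_on T q /\ forall t, 0 <= t <= be -> q t + b t * P q t = w t.
Proof.
  intros hq0 e0; destruct (picard_fixed_point q0 hq0 e0) as [q [hq hfix]].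
  exists q; split; [exact hq|]; apply fixed_point_solves; auto.
Qed.

End Step.

Theorem lemma3p1 (T M L : R) (P : (R -> R) -> (R -> R))
  (hT : T > 0) (hM : M > 0) (hL : L > 0)
  (hPC : forall q, cont_on T q -> cont_on T (P q))
  (hPlip : forall q1 q2, cont_on T q1 -> cont_on T q2 ->
     forall t, 0 <= t <= T -> forall m,
       is_max_on (fun s => Rabs (q1 s - q2 s)) 0 t m ->
       Rabs (P q1 t - P q2 t) <= M * m)
  (hinv : forall c, c >= 0 ->
     exists G : (R -> R) -> (R -> R),
       (forall w, cont_on T w -> cont_on T (G w)) /\
       (forall w, cont_on T w -> forall t, 0 <= t <= T -> IcP P c (G w) t = w t) /\
       (forall q, cont_on T q -> forall t, 0 <= t <= T -> G (IcP P c q) t = q t) /\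
       (forall w1 w2, cont_on T w1 -> cont_on T w2 ->
          forall t, 0 <= t <= T -> forall m,
            is_max_on (fun s => Rabs (w1 s - w2 s)) 0 t m ->
            Rabs (G w1 t - G w2 t) <= L * m))
  (w b : R -> R) (hw : cont_on T w) (hb : cont_on T b)
  (hbpos : forall t, 0 <= t <= T -> b t >= 0) :
  exists q, cont_on T q /\
    (forall t, 0 <= t <= T -> q t + b t * P q t = w t) /\
    (forall q', cont_on T q' ->
       (forall t, 0 <= t <= T -> q' t + b t * P q' t = w t) ->
       forall t, 0 <= t <= T -> q' t = q t).
Proof.
  assert (hLM : / (2 * L * M) > 0) by (apply Rinv_0_lt_compat; nra).
  destruct (uniform_grid T b _ hT hb hLM)
    as (a & N & a0 & aN & a_ge0 & a_mono & a_le & osc).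
  assert (resolvent_at : forall k, exists G, resolvent T L P (b (a k)) G)
    by (intro k; apply hinv, hbpos; auto).
  assert (extend : forall k q0, cont_on T q0 ->
            (forall t, 0 <= t < a k -> q0 t + b t * P q0 t = w t) ->
            exists q, cont_on T q /\ forall t, 0 <= t <= a (S k) -> q t + b t * P q t = w t).
  { intro k; destruct (resolvent_at k) as [G HG].
    exact (exists_step hM hL hPC hPlip HG hb hw (a_ge0 k) (a_mono k) (a_le (S k)) (osc k)). }
  assert (solution : forall k, exists q, cont_on T q /\
            forall t, 0 <= t <= a (S k) -> q t + b t * P q t = w t).
  { induction k as [|k [q0 [hq0 e0]]].
    - apply (extend O w hw); intros t ht; rewrite a0 in ht; lra.
    - apply (extend (S k) q0 hq0); intros t ht; apply e0; lra. }
  destruct (solution N) as [q [hq e]]; rewrite aN in e.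
  exists q; split; [exact hq | split; [exact e|]].
  intros q' hq' e'.
  assert (extend_eq : forall k, (forall s, 0 <= s < a k -> q' s = q s) ->
            forall s, 0 <= s <= a (S k) -> q' s = q s).
  { intros k agree; destruct (resolvent_at k) as [G HG].
    apply (unique_step hM hL hPC hPlip HG hb hw (a_ge0 k) (a_mono k) (a_le (S k)) (osc k));
      auto; intros t ht; [apply e' | apply e]; specialize (a_le (S k)); lra. }
  assert (agree : forall k s, 0 <= s <= a (S k) -> q' s = q s).
  { induction k as [|k IH].
    - apply extend_eq; intros s hs; rewrite a0 in hs; lra.
    - apply extend_eq; intros s hs; apply IH; lra. }
  intros t ht; apply (agree N); rewrite aN; exact ht.
Qed.
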